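(* Let $(X,b,m)$ be a weighted graph satisfying (C), (B), (M), and let $D\subseteq X$ be not $d_{\mathrm{comb}}$-relatively dense. Then there exists a sequence $(x_n)_{n\in\mathbb N}$ in $X$ such that for all $T>0$ and all $r\in[1,\infty]$, \[\lim_{n\to\infty}\|(S_{(\cdot)}\delta_{x_n})|_D\|_{L_r((0,T);\ell_2(D,m|_D))}=0,\] where $\delta_x=m(x)^{-1/2}\mathbf 1_{\{x\}}$.
   Context: Weighted graph $(X,b,m)$: $X$ countable, $m\colon X\to(0,\infty)$, $b$ symmetric non-negative with $b(x,x)=0$ and $\sum_yb(x,y)<\infty$. Paths are sequences $(x_0,\dots,x_k)$ with $b(x_j,x_{j+1})>0$. (C) connected; (B) $\sup_x\frac1{m(x)}\sum_yb(x,y)<\infty$; (M) $\sup_xm(x)<\infty$. Combinatorial metric $d_{\mathrm{comb}}(x,y)$: minimal number of steps of a path from $x$ to $y$ ($0$ if $x=y$). $D$ is $d_{\mathrm{comb}}$-relatively dense if $\inf\{R>0:\bigcup_{x\in D}\{y:d_{\mathrm{comb}}(x,y)\le R\}=X\}<\infty$. $H$ is the weighted Laplacian $Hf(x)=\frac1{m(x)}\sum_yb(x,y)(f(x)-f(y))$ on $\ell_2(X,m)$, $S_t=e^{-tH}$. *)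

From HB Require Import structures.
From mathcomp Require Import all_boot all_order all_algebra.
From mathcomp Require Import all_classical all_reals all_analysis.

Set Implicit Arguments.
Unset Strict Implicit.
Unset Printing Implicit Defensive.

Import Order.TTheory GRing.Theory Num.Theory.
Local Open Scope classical_set_scope.
Local Open Scope ring_scope.

Section WeightedGraphs.
Context {R : realType} {X : countType}.

Definition is_weighted_graph (b : X -> X -> R) (m : X -> R) : Prop :=
  [/\ (forall x, 0 < m x),
      (forall x y, 0 <= b x y),
      (forall x y, b x y = b y x),
      (forall x, b x x = 0) &
      (forall x, (\esum_(y in [set: X]) (b x y)%:E < +oo)%E)].

Definition gedge (b : X -> X -> R) : rel X := fun u v => 0 < b u v.

(* (x :: p) is a path of size p steps from x to y *)
Definition is_path_from_to (b : X -> X -> R) (x y : X) (p : seq X) : Prop :=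
  path (gedge b) x p /\ last x p = y.

Definition connected_graph (b : X -> X -> R) : Prop :=
  forall x y, exists p, is_path_from_to b x y p.

Definition cond_B (b : X -> X -> R) (m : X -> R) : Prop :=
  exists C : R, forall x,
    ((m x)^-1%:E * (\esum_(y in [set: X]) (b x y)%:E) <= C%:E)%E.

Definition cond_M (m : X -> R) : Prop := exists C : R, forall x, m x <= C.

(* combinatorial metric: minimal number of steps of a path from x to y
   (0 if x = y; set to 0 as well if no path exists, which does not happen
   under (C)) *)
Definition dcomb (b : X -> X -> R) (x y : X) : nat :=
  match pselect (exists n, `[< exists p, is_path_from_to b x y p /\ size p = n >]) with
  | left H => ex_minn H
  | right _ => 0%N
  end.

(* D is d_comb-relatively dense:
   inf {R > 0 : \bigcup_{x in D} B(x,R) = X} < oo, i.e. this set is non-empty *)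
Definition rel_dense (b : X -> X -> R) (D : set X) : Prop :=
  exists r : R, 0 < r /\
    \bigcup_(x in D) [set y | ((dcomb b x y)%:R <= r)] = [set: X].

Definition rsum (f : X -> R) : R :=
  fine (\esum_(y in [set: X]) (Num.max (f y) 0)%:E)%E
  - fine (\esum_(y in [set: X]) (Num.max (- f y) 0)%:E)%E.

Definition laplacian (b : X -> X -> R) (m : X -> R) (f : X -> R) : X -> R :=
  fun x => (m x)^-1 * rsum (fun y => b x y * (f x - f y)).

(* S_t f = e^{-tH} f = sum_k (-t)^k / k! H^k f  (H is bounded under (B)) *)
Definition heat_sg (b : X -> X -> R) (m : X -> R) (t : R) (f : X -> R) : X -> R :=
  fun x => limn (fun n => \sum_(k < n)
     ((- t) ^+ k / (k`!)%:R * iter k (laplacian b m) f x)).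

Definition delta (m : X -> R) (x : X) : X -> R :=
  fun y => if y == x then (Num.sqrt (m x))^-1 else 0.

Definition l2norm_on (m : X -> R) (D : set X) (f : X -> R) : \bar R :=
  ((\esum_(y in D) (m y * f y ^+ 2)%:E) `^ (2^-1)%R)%E.

End WeightedGraphs.

Definition Lr_norm_0T {R : realType} (T : R) (r : \bar R) (g : R -> \bar R) : \bar R :=
  Lnorm (mrestr (@lebesgue_measure R) (measurable_itv `]0%R, T[)) r g.

From HB Require Import structures.
From mathcomp Require Import all_boot all_order all_algebra.
From mathcomp Require Import all_classical all_reals all_analysis.
From mathcomp Require Import ring ess_sup_inf.

(* Under (B) the Laplacian H is bounded by 2C both on l_infty and on the
   weighted l_1 space, and H^k delta_y vanishes at combinatorial distance
   > k from y.  Hence on a set D lying at distance >= n from y, S_t delta_y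
   only sees the tail sum_{k >= n} (2CT)^k/k! of the exponential series;
   combining the l_infty and l_1 bounds gives an l_2(D) bound of order the
   square root of this tail, uniformly in t in (0,T).  If D is not
   relatively dense, for every n there is a point y_n at distance > n from
   D, and the L_r((0,T)) norms tend to 0. *)

Set Implicit Arguments.
Unset Strict Implicit.
Unset Printing Implicit Defensive.
Import Order.TTheory GRing.Theory Num.Theory.
Import numFieldNormedType.Exports.
Local Open Scope classical_set_scope.
Local Open Scope ring_scope.

Section esum_lemmas.
Context {R : realType} {T : choiceType}.

Lemma esumZl_le (S : set T) (c : R) (a : T -> \bar R) : 0 <= c ->
  (forall i, (0 <= a i)%E) ->
  (\esum_(i in S) (c%:E * a i) <= c%:E * \esum_(i in S) a i)%E.
Proof.
move=> c0 a0; apply: ge_ereal_sup => _ [F [finF FS] <-].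
rewrite -ge0_mule_fsumr//; apply: lee_wpmul2l; first by rewrite lee_fin.
by apply: ereal_sup_ubound; exists F.
Qed.

Lemma exchange_esum {T' : choiceType} (A : set T) (B : set T')
    (a : T -> T' -> \bar R) : (forall i j, (0 <= a i j)%E) ->
  \esum_(i in A) \esum_(j in B) a i j = \esum_(j in B) \esum_(i in A) a i j.
Proof.
move=> a0; rewrite !esum_esum//.
rewrite (@reindex_esum _ _ _ (B `*`` (fun=> A)) (A `*`` (fun=> B))
  (fun k => (k.2, k.1))) //.
split=> [[i j] [] //|[? ?] [? ?] _ _ [-> ->] //|[i j] [hi hj]].
by exists (j, i).
Qed.

End esum_lemmas.

Lemma ge0_le_poweR {R : realType} (r : R) (x y : \bar R) :
  0 <= r -> (0 <= x)%E -> (x <= y)%E -> (x `^ r <= y `^ r)%E.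
Proof.
move=> r0 x0 xy; apply: gt0_ler_poweR; rewrite ?in_itv/= ?leey ?andbT//.
exact: le_trans xy.
Qed.

Section exp_series.
Context {R : realType}.

Lemma norm_limn_series_le (u : R^nat) :
  (\sum_(k <oo) (`|u k|)%:E < +oo)%E ->
  ((`|limn (fun n => \sum_(k < n) u k)|)%:E <= \sum_(k <oo) (`|u k|)%:E)%E.
Proof.
move=> ufin; have ucvg := nnseries_is_cvg (fun k => normr_ge0 (u k)) ufin.
have -> : (fun n => \sum_(k < n) u k) = series u.
  by apply/funext => n; rewrite /series /= big_mkord.
apply: le_trans (_ : (limn [normed series u])%:E <= _)%E.
  by rewrite lee_fin; exact: lim_series_norm.
rewrite -EFin_lim//.
rewrite (_ : EFin \o _ = fun n => \sum_(0 <= k < n) (`|u k|)%:E)%E//.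
by apply/funext => n; rewrite /= sumEFin.
Qed.

Lemma eseries_expR (x : R) :
  (\sum_(k <oo) ((x ^+ k / k`!%:R)%:E) = (expR x)%:E)%E.
Proof.
rewrite /expR -EFin_lim; last exact: is_cvg_series_exp_coeff.
by apply/congr_lim/funext => n; rewrite /= sumEFin.
Qed.

Definition exp_tail (x : R) (n : nat) : \bar R :=
  (\sum_(n <= k <oo) ((x ^+ k / k`!%:R)%:E))%E.

Lemma exp_tail_mkcond (x : R) n : (exp_tail x n =
  \sum_(k <oo) (if (n <= k)%N then (x ^+ k / k`!%:R)%:E else 0))%E.
Proof. by rewrite /exp_tail eseries_cond eseries_mkcondr. Qed.

Lemma exp_tail_ge0 (x : R) n : 0 <= x -> (0 <= exp_tail x n)%E.
Proof.
move=> x0; apply: nneseries_ge0 => k _ _.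
by rewrite lee_fin; exact: exp_coeff_ge0.
Qed.

Lemma exp_tail_fin_num (x : R) n : 0 <= x -> exp_tail x n \is a fin_num.
Proof.
move=> x0; rewrite ge0_fin_numE ?exp_tail_ge0//.
apply: (@le_lt_trans _ _ (expR x)%:E); last exact: ltry.
rewrite -eseries_expR (nneseries_split 0 n) => [|k _]; last first.
  by rewrite lee_fin; exact: exp_coeff_ge0.
rewrite add0n leeDr// sume_ge0// => k _.
by rewrite lee_fin; exact: exp_coeff_ge0.
Qed.

Lemma fine_exp_tail_cvg0 (x : R) : 0 <= x ->
  fine (exp_tail x n) @[n --> \oo] --> 0.
Proof.
move=> x0; have : exp_tail x n @[n --> \oo] --> 0%E.
  apply: nneseries_tail_cvg => [|k _]; first by rewrite eseries_expR ltry.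
  by rewrite lee_fin; exact: exp_coeff_ge0.
by case/fine_cvgP.
Qed.

End exp_series.

Section rsum_lemmas.
Context {R : realType} {X : countType}.

Lemma norm_rsum_le (g : X -> R) :
  ((`|rsum g|)%:E <= \esum_(y in [set: X]) (`|g y|)%:E)%E.
Proof.
have <- : (\esum_(y in [set: X]) (g^\+ y)%:E + \esum_(y in [set: X]) (g^\- y)%:E
    = \esum_(y in [set: X]) (`|g y|)%:E)%E.
  rewrite -esumD => [|y _|y _]; last 2 first.
  - by rewrite lee_fin funrpos_ge0.
  - by rewrite lee_fin funrneg_ge0.
  apply: eq_esum => y _; rewrite -EFinD; congr EFin.
  exact: (congr1 (fun h => h y) (funrposDneg g)).
have P0 : (0 <= \esum_(y in [set: X]) (g^\+ y)%:E)%E.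
  by apply: esum_ge0 => y _; rewrite lee_fin funrpos_ge0.
have N0 : (0 <= \esum_(y in [set: X]) (g^\- y)%:E)%E.
  by apply: esum_ge0 => y _; rewrite lee_fin funrneg_ge0.
rewrite /rsum; move: (\esum_(y in _) _)%E (\esum_(y in _) _)%E P0 N0.
move=> [p| |] [n| |] //= p0 n0; rewrite ?leey// lee_fin.
by rewrite (le_trans (ler_normB _ _))// !ger0_norm// -lee_fin.
Qed.

Lemma rsum_eq0 (g : X -> R) : (forall y, g y = 0) -> rsum g = 0.
Proof.
by move=> g0; rewrite /rsum !esum1 ?subrr// => y _; rewrite g0 ?oppr0 maxxx.
Qed.

End rsum_lemmas.

Lemma dcomb_le_size {R : realType} {X : countType} (b : X -> X -> R) x y p :
  is_path_from_to b x y p -> (dcomb b x y <= size p)%N.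
Proof.
move=> xyp; rewrite /dcomb; case: pselect => // H.
by case: ex_minnP => n _; apply; apply/asboolP; exists p.
Qed.

Section heat_semigroup.
Context {R : realType} {X : countType} (b : X -> X -> R) (m : X -> R).
Hypothesis graph_bm : is_weighted_graph b m.
Variable C : R.
Hypothesis C_ge0 : 0 <= C.
Hypothesis deg_le : forall x,
  (\esum_(y in [set: X]) (b x y)%:E <= (C * m x)%:E)%E.

Let m_gt0 x : 0 < m x. Proof. by case: graph_bm. Qed.
Let b_ge0 x y : 0 <= b x y. Proof. by case: graph_bm. Qed.
Let b_sym x y : b x y = b y x. Proof. by case: graph_bm. Qed.

Definition l1norm (f : X -> R) : \bar R :=
  \esum_(x in [set: X]) (m x * `|f x|)%:E.

Lemma norm_laplacian_le (f : X -> R) (M : R) x : 0 <= M ->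
  (forall y, `|f y| <= M) -> `|laplacian b m f x| <= 2 * C * M.
Proof.
move=> M0 fM; rewrite /laplacian normrM ger0_norm ?invr_ge0 ?(ltW (m_gt0 x))//.
rewrite -(ler_pM2l (m_gt0 x)) mulrA mulfV ?gt_eqF// mul1r -lee_fin.
apply: le_trans (norm_rsum_le _) _.
apply: (@le_trans _ _ (\esum_(y in [set: X]) ((2 * M)%:E * (b x y)%:E))%E).
  apply: le_esum => y _; rewrite -EFinM lee_fin normrM ger0_norm// mulrC.
  rewrite ler_wpM2r// (le_trans (ler_normB _ _))//.
  by rewrite mulr2n mulrDl mul1r lerD.
have bE_ge0 y : (0 <= (b x y)%:E)%E by rewrite lee_fin.
apply: le_trans (esumZl_le _ (mulr_ge0 (ler0n _ 2) M0) bE_ge0) _.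
apply: le_trans (lee_wpmul2l _ (deg_le x)) _; first by rewrite lee_fin mulr_ge0.
by rewrite -EFinM lee_fin [leRHS](_ : _ = 2 * M * (C * m x))//; ring.
Qed.

Lemma laplacian_neq0 (f : X -> R) x : laplacian b m f x != 0 ->
  f x != 0 \/ exists2 y, gedge b x y & f y != 0.
Proof.
apply: contraPP => /not_orP[/negP/negPn/eqP fx0 no_nbr].
apply/negP/negPn/eqP; rewrite /laplacian rsum_eq0 ?mulr0// => y.
rewrite fx0 sub0r; have [bxy|bxy] := ltP 0 (b x y).
  suff -> : f y = 0 by rewrite oppr0 mulr0.
  by apply: contra_notP no_nbr => /eqP fy; exists y.
have -> : b x y = 0 by apply/eqP; rewrite eq_le bxy b_ge0.
by rewrite mul0r.
Qed.

Lemma esum_weighted_deg_le (g : X -> R) : (forall x, 0 <= g x) ->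
  (\esum_(x in [set: X]) \esum_(y in [set: X]) (g x * b x y)%:E
    <= C%:E * \esum_(x in [set: X]) (m x * g x)%:E)%E.
Proof.
move=> g0.
have mg_ge0 x : (0 <= (m x * g x)%:E)%E.
  by rewrite lee_fin mulr_ge0 ?(ltW (m_gt0 x)).
have bE_ge0 x y : (0 <= (b x y)%:E)%E by rewrite lee_fin.
apply: le_trans (esumZl_le _ C_ge0 mg_ge0); apply: le_esum => x _.
under eq_esum do rewrite EFinM.
apply: le_trans (esumZl_le _ (g0 x) (bE_ge0 x)) _.
apply: le_trans (lee_wpmul2l _ (deg_le x)) _; first by rewrite lee_fin.
by rewrite -!EFinM lee_fin mulrC mulrA.
Qed.

Lemma l1norm_laplacian_le (f : X -> R) :
  (l1norm (laplacian b m f) <= (2 * C)%:E * l1norm f)%E.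
Proof.
have fb_ge0 u v w : (0 <= (`|f u| * b v w)%:E)%E by rewrite lee_fin mulr_ge0.
have pointwise x : ((m x * `|laplacian b m f x|)%:E <= \esum_(y in [set: X])
     (`|f x| * b x y)%:E + \esum_(y in [set: X]) (`|f y| * b x y)%:E)%E.
  rewrite -esumD => [|y _|y _] //.
  rewrite /laplacian normrM ger0_norm ?invr_ge0 ?(ltW (m_gt0 x))//.
  rewrite mulrA mulfV ?gt_eqF// mul1r.
  apply: le_trans (norm_rsum_le _) _; apply: le_esum => y _.
  rewrite -EFinD lee_fin normrM ger0_norm// mulrC -mulrDl.
  by rewrite ler_wpM2r// ler_normB.
apply: le_trans (le_esum (fun x _ => pointwise x)) _.
rewrite esumD => [|x _|x _]; last 2 first.
- exact: esum_ge0.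
- exact: esum_ge0.
have out_le := esum_weighted_deg_le (fun x => normr_ge0 (f x)).
have in_le : (\esum_(x in [set: X]) \esum_(y in [set: X]) (`|f y| * b x y)%:E
    <= C%:E * l1norm f)%E.
  rewrite exchange_esum//; apply: le_trans out_le.
  by under eq_esum => y _ do under eq_esum => x _ do rewrite b_sym.
apply: le_trans (leeD out_le in_le) _.
by rewrite (_ : 2 * C = C + C); [rewrite EFinD ge0_muleDl// lee_fin|ring].
Qed.

Section delta_iterates.
Variable y0 : X.

Definition lap_iter (k : nat) : X -> R := iter k (laplacian b m) (delta m y0).

Lemma norm_lap_iter_le k z :
  `|lap_iter k z| <= (2 * C) ^+ k * (Num.sqrt (m y0))^-1.
Proof.
elim: k z => [|k IH] z.
  rewrite expr0 mul1r /lap_iter /= /delta.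
  by case: ifP => _; rewrite ?normr0 ?ger0_norm ?invr_ge0 ?sqrtr_ge0.
rewrite /lap_iter iterS exprS -mulrA; apply: norm_laplacian_le => //.
by rewrite !mulr_ge0 ?exprn_ge0 ?mulr_ge0 ?invr_ge0 ?sqrtr_ge0.
Qed.

Lemma l1norm_delta : l1norm (delta m y0) = (Num.sqrt (m y0))%:E.
Proof.
rewrite /l1norm (eq_esum (b := fun x => if x \in [set y0]
    then (m x * `|delta m y0 x|)%:E else 0%E)) => [|x _]; last first.
  have [->|xy0] := eqVneq x y0; first by rewrite mem_set.
  rewrite memNset; last by move=> /= xy0'; rewrite xy0' eqxx in xy0.
  by rewrite /delta (negPf xy0) normr0 mulr0.
rewrite -esum_mkcond esum_set1 ?lee_fin ?mulr_ge0 ?(ltW (m_gt0 y0))//.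
rewrite /delta eqxx ger0_norm ?invr_ge0 ?sqrtr_ge0//; congr EFin.
rewrite -{1}(sqr_sqrtr (ltW (m_gt0 y0))) expr2 -mulrA mulfV ?mulr1//.
by rewrite gt_eqF// sqrtr_gt0.
Qed.

Lemma l1norm_lap_iter_le k :
  (l1norm (lap_iter k) <= ((2 * C) ^+ k * Num.sqrt (m y0))%:E)%E.
Proof.
elim: k => [|k IH]; first by rewrite expr0 mul1r /lap_iter /= l1norm_delta.
rewrite /lap_iter iterS; apply: le_trans (l1norm_laplacian_le _) _.
apply: le_trans (lee_wpmul2l _ IH) _; first by rewrite lee_fin mulr_ge0.
by rewrite -EFinM exprS -mulrA.
Qed.

Lemma lap_iter_neq0_path k z : lap_iter k z != 0 ->
  exists2 p, is_path_from_to b z y0 p & (size p <= k)%N.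
Proof.
elim: k z => [|k IH] z.
  rewrite /lap_iter /= /delta; case: ifPn => [/eqP -> _|]; last by rewrite eqxx.
  by exists [::].
rewrite /lap_iter iterS.
case/laplacian_neq0 => [/IH[p zp pk]|[y zy /IH[p [yp py0] pk]]].
  by exists p => //; rewrite (leq_trans pk).
by exists (y :: p); [split => //=; rewrite zy|rewrite /= ltnS].
Qed.

Lemma lap_iter_far k z : (k < dcomb b z y0)%N -> lap_iter k z = 0.
Proof.
move=> kd; apply/eqP; apply: contraTT kd => /lap_iter_neq0_path[p zp pk].
by rewrite -leqNgt (leq_trans (dcomb_le_size zp)).
Qed.

Variable t : R.

Definition heat_term k z := (- t) ^+ k / k`!%:R * lap_iter k z.

Lemma norm_heat_term k z :
  `|heat_term k z| = `|t| ^+ k / k`!%:R * `|lap_iter k z|.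
Proof.
rewrite /heat_term !normrM normrX normrN normfV.
by rewrite (ger0_norm (ler0n _ _)).
Qed.

Lemma eseries_norm_heat_term_le z : (\sum_(k <oo) (`|heat_term k z|)%:E
  <= ((Num.sqrt (m y0))^-1 * expR (2 * C * `|t|))%:E)%E.
Proof.
set K := 2 * C; have K_ge0 : 0 <= K by rewrite /K mulr_ge0.
apply: (@le_trans _ _ (\sum_(k <oo) ((Num.sqrt (m y0))^-1%:E
    * ((K * `|t|) ^+ k / k`!%:R)%:E))%E).
  apply: lee_nneseries => [k _ _|k _]; first by rewrite lee_fin.
  rewrite -EFinM lee_fin norm_heat_term exprMn.
  rewrite [leRHS](_ : _ = `|t| ^+ k / k`!%:R
    * (K ^+ k * (Num.sqrt (m y0))^-1)); last by ring.
  by rewrite ler_wpM2l ?norm_lap_iter_le//; exact: exp_coeff_ge0.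
rewrite nneseriesZl => [|k _]; first by rewrite eseries_expR -EFinM.
by rewrite lee_fin; apply: exp_coeff_ge0; exact: (mulr_ge0 K_ge0 (normr_ge0 t)).
Qed.

Lemma norm_heat_le_eseries z : ((`|heat_sg b m t (delta m y0) z|)%:E
  <= \sum_(k <oo) (`|heat_term k z|)%:E)%E.
Proof.
apply: norm_limn_series_le.
by apply: le_lt_trans (eseries_norm_heat_term_le z) _; exact: ltry.
Qed.

Lemma norm_heat_le z : `|heat_sg b m t (delta m y0) z|
  <= (Num.sqrt (m y0))^-1 * expR (2 * C * `|t|).
Proof.
rewrite -lee_fin (le_trans (norm_heat_le_eseries z))//.
exact: eseries_norm_heat_term_le.
Qed.

Variables (D : set X) (n : nat) (T : R).
Hypothesis D_far : forall z, D z -> (n <= dcomb b z y0)%N.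
Hypothesis t_le : `|t| <= T.

Let T_ge0 : 0 <= T. Proof. exact: le_trans (normr_ge0 t) t_le. Qed.

Lemma esum_far_heat_term_le k : (\esum_(z in D) (m z * `|heat_term k z|)%:E
  <= (Num.sqrt (m y0))%:E
     * (if (n <= k)%N then ((2 * C * T) ^+ k / k`!%:R)%:E else 0%E))%E.
Proof.
case: ifPn => [nk|]; last first.
  rewrite -ltnNge => kn; rewrite mule0 esum1// => z Dz.
  rewrite /heat_term lap_iter_far ?mulr0 ?normr0 ?mulr0//.
  exact: leq_trans kn (D_far Dz).
apply: (@le_trans _ _ (\esum_(z in [set: X]) (m z * `|heat_term k z|)%:E)%E).
  rewrite esum_mkcond; apply: le_esum => z _.
  by case: ifPn => // _; rewrite lee_fin mulr_ge0 ?(ltW (m_gt0 z)).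
under eq_esum do rewrite norm_heat_term mulrCA EFinM.
have mlap_ge0 z : (0 <= (m z * `|lap_iter k z|)%:E)%E.
  by rewrite lee_fin mulr_ge0 ?(ltW (m_gt0 z)).
have coeff_ge0 : 0 <= `|t| ^+ k / k`!%:R by apply: exp_coeff_ge0.
have coeff_le : `|t| ^+ k / k`!%:R * (2 * C) ^+ k <= (2 * C * T) ^+ k / k`!%:R.
  rewrite mulrAC -exprMn ler_wpM2r ?invr_ge0 ?ler0n//.
  apply: lerXn2r; rewrite ?nnegrE ?mulr_ge0 ?T_ge0//.
  by rewrite mulrC ler_wpM2l ?mulr_ge0.
apply: le_trans (esumZl_le _ coeff_ge0 mlap_ge0) _.
apply: le_trans (lee_wpmul2l _ (l1norm_lap_iter_le k)) _.
  by rewrite lee_fin.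
by rewrite -!EFinM lee_fin mulrA mulrC ler_wpM2l ?sqrtr_ge0.
Qed.

Lemma esum_far_heat_le :
  (\esum_(z in D) (m z * `|heat_sg b m t (delta m y0) z|)%:E
    <= (Num.sqrt (m y0))%:E * exp_tail (2 * C * T) n)%E.
Proof.
have term_ge0 z k : (0 <= (m z * `|heat_term k z|)%:E)%E.
  by rewrite lee_fin mulr_ge0 ?(ltW (m_gt0 z)).
have coeff_ge0 k : (0 <= if (n <= k)%N
    then ((2 * C * T) ^+ k / k`!%:R)%:E else 0%E)%E.
  case: ifP => // _; rewrite lee_fin; apply: exp_coeff_ge0.
  by rewrite !mulr_ge0 ?T_ge0.
apply: (@le_trans _ _
    (\esum_(z in D) \esum_(k in [set: nat]) (m z * `|heat_term k z|)%:E)%E).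
  apply: le_esum => z _; rewrite -nneseries_esumT//.
  under eq_eseriesr do rewrite EFinM.
  rewrite nneseriesZl => [|k _]; last by rewrite lee_fin.
  rewrite EFinM lee_wpmul2l ?lee_fin ?(ltW (m_gt0 z))//.
  exact: norm_heat_le_eseries.
rewrite exchange_esum//.
apply: le_trans (le_esum (fun k _ => esum_far_heat_term_le k)) _.
rewrite -nneseries_esumT => [|k]; last by rewrite mule_ge0 ?lee_fin ?sqrtr_ge0.
by rewrite nneseriesZl// exp_tail_mkcond.
Qed.

Lemma esum_far_heat_sqr_le :
  (\esum_(z in D) (m z * heat_sg b m t (delta m y0) z ^+ 2)%:E
    <= (expR (2 * C * T))%:E * exp_tail (2 * C * T) n)%E.
Proof.
set B := (Num.sqrt (m y0))^-1 * expR (2 * C * T).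
have B_ge0 : 0 <= B by rewrite mulr_ge0 ?invr_ge0 ?sqrtr_ge0 ?expR_ge0.
have heat_le z : `|heat_sg b m t (delta m y0) z| <= B.
  apply: le_trans (norm_heat_le z) _.
  by rewrite ler_wpM2l ?invr_ge0 ?sqrtr_ge0// ler_expR ler_wpM2l ?mulr_ge0.
apply: (@le_trans _ _ (\esum_(z in D)
    (B%:E * (m z * `|heat_sg b m t (delta m y0) z|)%:E))%E).
  apply: le_esum => z _; rewrite -EFinM lee_fin -real_normK ?num_real//.
  rewrite expr2 mulrA mulrC ler_wpM2r ?mulr_ge0 ?(ltW (m_gt0 z))//.
have mheat_ge0 z : (0 <= (m z * `|heat_sg b m t (delta m y0) z|)%:E)%E.
  by rewrite lee_fin mulr_ge0 ?(ltW (m_gt0 z)).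
apply: le_trans (esumZl_le _ B_ge0 mheat_ge0) _.
apply: le_trans (lee_wpmul2l _ esum_far_heat_le) _; first by rewrite lee_fin.
rewrite muleA -EFinM /B mulrAC mulVf ?mul1r//.
by rewrite gt_eqF// sqrtr_gt0.
Qed.

Lemma l2norm_far_heat_le : (l2norm_on m D (heat_sg b m t (delta m y0))
  <= (Num.sqrt (expR (2 * C * T) * fine (exp_tail (2 * C * T) n)))%:E)%E.
Proof.
have tail_ge0 : (0 <= exp_tail (2 * C * T) n)%E.
  by rewrite exp_tail_ge0 ?mulr_ge0 ?T_ge0.
rewrite /l2norm_on -powR12_sqrt ?mulr_ge0 ?expR_ge0 ?fine_ge0// -poweR_EFin.
apply: ge0_le_poweR; first by rewrite invr_ge0.
  by apply: esum_ge0 => z _; rewrite lee_fin mulr_ge0 ?sqr_ge0 ?(ltW (m_gt0 z)).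
apply: le_trans esum_far_heat_sqr_le _.
by rewrite EFinM fineK ?exp_tail_fin_num ?mulr_ge0 ?T_ge0.
Qed.

End delta_iterates.

End heat_semigroup.

Lemma cond_B_degree_le {R : realType} {X : countType} (b : X -> X -> R)
    (m : X -> R) : is_weighted_graph b m -> cond_B b m ->
  exists2 C, 0 <= C &
    forall x, (\esum_(y in [set: X]) (b x y)%:E <= (C * m x)%:E)%E.
Proof.
move=> [m_gt0 b_ge0 _ _ deg_fin] [C1 C1_le].
exists (Num.max C1 0) => [|x]; first by rewrite le_max lexx orbT.
have deg_ge0 : (0 <= \esum_(y in [set: X]) (b x y)%:E)%E.
  by apply: esum_ge0 => y _; rewrite lee_fin.
move: (C1_le x); move: (\esum_(y in _) _)%E (deg_fin x) deg_ge0.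
move=> [d| |] // _ _.
rewrite -EFinM !lee_fin -(ler_pM2l (m_gt0 x)) mulrA mulfV ?gt_eqF// mul1r.
move=> /le_trans; apply.
by rewrite mulrC ler_wpM2r ?(ltW (m_gt0 x))// le_max lexx.
Qed.

Lemma not_rel_dense_far {R : realType} {X : countType} (b : X -> X -> R)
    (D : set X) : ~ rel_dense b D ->
  forall n : nat, exists y, forall z, D z -> (n < dcomb b z y)%N.
Proof.
move=> not_dense n; apply: contrapT => no_far; apply: not_dense.
exists n.+1%:R; split => //; apply/seteqP; split => // y _.
apply: contrapT => y_far; apply: no_far; exists y => z Dz.
rewrite ltnNge; apply/negP => zy_le; apply: y_far; exists z => //=.
by rewrite ler_nat (leq_trans zy_le).
Qed.

Lemma ge0_le_integralT d (T : measurableType d) {R : realType}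
    (mu : {measure set T -> \bar R}) (f g : T -> \bar R) :
  (forall t, (0 <= f t)%E) -> (forall t, (f t <= g t)%E) ->
  (\int[mu]_t f t <= \int[mu]_t g t)%E.
Proof.
move=> f0 fg; have g0 t : (0 <= g t)%E by apply: le_trans (fg t).
rewrite !ge0_integralTE//; apply: le_ereal_sup => _ [h hf <-].
by exists h => // t; apply: le_trans (hf t) (fg t).
Qed.

Section Lr_norm_0T_bound.
Context {R : realType} (T : R).
Hypothesis T_gt0 : 0 < T.
Let I := `]0%R, T[%classic : set R.
Let mu := mrestr (@lebesgue_measure R) (measurable_itv `]0%R, T[).

Let mu_setT : mu [set: R] = T%:E.
Proof.
by rewrite /mu /mrestr setTI lebesgue_measure_itv/= lte_fin T_gt0 oppr0 adde0.
Qed.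

Let ae_itv (P : R -> Prop) : (forall t, I t -> P t) -> \forall t \ae mu, P t.
Proof.
move=> IP; exists (~` I); split.
- by apply: measurableC; exact: measurable_itv.
- by rewrite /mu /mrestr setICl measure0.
- by move=> t /= nPt It; apply/nPt/IP.
Qed.

(* The functions to be integrated need not be measurable; they are compared
   with a measurable majorant which is infinite off the interval. *)
Let integral_itv_majorant (a : R) :
  (\int[mu]_t (if t \in I then a%:E else +oo) = a%:E * T%:E)%E.
Proof.
rewrite (ae_eq_integral (cst a%:E))//.
- by rewrite integral_cst//; congr (_ * _)%E; exact: mu_setT.
- move=> _ B mB; rewrite setTI.
  have -> : (fun t => if t \in I then a%:E else +oo%E) @^-1` B =
      (I `&` [set _ | B a%:E]) `|` (~` I `&` [set _ | B +oo%E]).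
    apply/seteqP; split => t /=.
      case: ifPn => [/set_mem It Bt|tI Bt]; first by left.
      by right; split => // /mem_set; apply/negP.
    by move=> [[/mem_set -> //]|[It Boo]]; rewrite memNset.
  apply: measurableU; apply: measurableI.
  + exact: measurable_itv.
  + have [Ba|nBa] := pselect (B a%:E).
      by rewrite (_ : [set _ | _] = setT)//; apply/seteqP; split.
    by rewrite (_ : [set _ | _] = set0)//; apply/seteqP; split.
  + by apply: measurableC; exact: measurable_itv.
  + have [Boo|nBoo] := pselect (B +oo%E).
      by rewrite (_ : [set _ | _] = setT)//; apply/seteqP; split.
    by rewrite (_ : [set _ | _] = set0)//; apply/seteqP; split.
- by apply: ae_itv => t It _; rewrite mem_set.
Qed.

Lemma Lr_norm_0T_le (r : \bar R) : (1 <= r)%E -> exists2 L : R, 0 <= L &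
  forall (f : R -> \bar R) (c : R), 0 <= c -> (forall t, (0 <= f t)%E) ->
    (forall t, 0 < t < T -> (f t <= c%:E)%E) ->
    (Lr_norm_0T T r f <= (c * L)%:E)%E.
Proof.
case: r => [p| |] //; rewrite ?lee_fin => p_ge1.
- have p_gt0 : 0 < p by apply: lt_le_trans p_ge1.
  exists (T `^ p^-1) => [|f c c0 f0 f_le]; first exact: powR_ge0.
  rewrite /Lr_norm_0T unlock.
  apply: (@le_trans _ _ (((c `^ p) * T)%:E `^ p^-1)%E).
    apply: ge0_le_poweR; first by rewrite invr_ge0 ltW.
      by apply: integral_ge0 => t _; exact: poweR_ge0.
    rewrite EFinM -integral_itv_majorant.
    apply: ge0_le_integralT => [t|t]; first exact: poweR_ge0.
    case: ifPn => [/[!inE] It|_]; last exact: leey.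
    rewrite gee0_abs// -poweR_EFin; apply: ge0_le_poweR (ltW p_gt0) (f0 t) _.
    by apply: f_le; move: It; rewrite /I/= in_itv.
  rewrite poweR_EFin lee_fin powRM ?powR_ge0 ?(ltW T_gt0)// -powRrM.
  by rewrite mulfV ?gt_eqF// powRr1.
- exists 1 => // f c c0 f0 f_le; rewrite /Lr_norm_0T unlock /=.
  have -> : (0%R < mrestr lebesgue_measure (measurable_itv `]0%R, T[)
       [set: g_sigma_algebraType (R.-ocitv).-measurable])%E.
    by have := mu_setT; rewrite /mu => ->; rewrite lte_fin.
  rewrite mulr1; apply/ess_supP; apply: ae_itv => t It /=.
  by rewrite gee0_abs//; apply: f_le; move: It; rewrite /I/= in_itv.
Qed.

End Lr_norm_0T_bound.

Unset Implicit Arguments.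

Theorem mainTheorem10 (R : realType) (X : countType)
    (b : X -> X -> R) (m : X -> R) (D : set X) :
  is_weighted_graph b m ->
  connected_graph b -> cond_B b m -> cond_M m ->
  ~ rel_dense b D ->
  exists xs : nat -> X,
    forall (T : R) (r : \bar R), 0 < T -> (1%:E <= r)%E ->
      (fun n => Lr_norm_0T T r
                  (fun t => l2norm_on m D (heat_sg b m t (delta m (xs n)))))
        @ \oo --> 0%E.
Proof.
move=> graph_bm _ /(cond_B_degree_le graph_bm)[C C_ge0 deg_le] _.
move=> /not_rel_dense_far /choice[xs xs_far].
exists xs => T r T_gt0 r_ge1.
have [L L_ge0 Lr_le] := Lr_norm_0T_le T_gt0 r_ge1.
pose x := 2 * C * T; have x_ge0 : 0 <= x by rewrite /x !mulr_ge0 ?(ltW T_gt0).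
pose c n := Num.sqrt (expR x * fine (exp_tail x n)).
apply: (@squeeze_cvge _ _ _ _ (cst 0%E) _ (fun n => (c n * L)%:E)).
- apply: nearW => n; rewrite Lnorm_ge0/=.
  apply: Lr_le => [|t|t /andP[t_gt0 t_lt]]; first exact: sqrtr_ge0.
    exact: poweR_ge0.
  apply: l2norm_far_heat_le => // [z Dz|]; first exact/ltnW/xs_far.
  by rewrite ger0_norm ltW.
- exact: cvg_cst.
- apply: cvg_EFin; first exact: nearW.
  rewrite -(mul0r L); apply: cvgMl; rewrite -sqrtr0.
  apply: (continuous_cvg _ (@sqrt_continuous R 0)).
  by rewrite -(mulr0 (expR x)); apply: cvgMr; exact: fine_exp_tail_cvg0.
Qed.
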